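(* A skew-convex function $f\colon X\to K$ is skew invertible if and only if $f(X)\subseteq K^*$ and for every $x\in X$ there exists $a\in K^*$ such that $f({}^{a}x)=a^{-1}$.
   Context: Let $K$ be a skew field, $K^*=K\setminus\{0\}$, and $X$ a nonempty set with a left $K^*$-action $(a,x)\mapsto{}^{a}x$. $\mathcal F(X)$ is the set of functions $X\to K$ with pointwise addition; the constant function with value $a\in K$ is denoted $a$. The skew product is $(f\diamond g)(x)=f({}^{g(x)}x)\,g(x)$ if $g(x)\neq0$ and $0$ if $g(x)=0$. A function $f$ is skew convex if $f\diamond(a+b)=f\diamond a+f\diamond b$ for all $a,b\in K$. $f$ is skew invertible if there is $g\in\mathcal F(X)$ with $f\diamond g=g\diamond f=1$. *)

From mathcomp Require Import all_boot all_algebra.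
Set Implicit Arguments. Unset Strict Implicit. Unset Printing Implicit Defensive.
Import GRing.Theory.
Local Open Scope ring_scope.

Definition skew_field_axiom (K : unitRingType) : Prop :=
  forall a : K, a != 0 -> a \is a GRing.unit.

(* A left action of K^* on X, given by act : K -> X -> X; only its values
   at nonzero scalars matter. *)
Definition left_Kstar_action (K : unitRingType) (X : Type) (act : K -> X -> X) : Prop :=
  (forall x, act 1 x = x) /\
  (forall (a b : K) x, a != 0 -> b != 0 -> act a (act b x) = act (a * b) x).

Definition skew_prod (K : unitRingType) (X : Type) (act : K -> X -> X)
  (f g : X -> K) : X -> K :=
  fun x => if g x == 0 then 0 else f (act (g x) x) * g x.

Definition cstK (K : unitRingType) (X : Type) (a : K) : X -> K := fun _ => a.
Arguments cstK {K} X a _.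

Definition skew_convex (K : unitRingType) (X : Type) (act : K -> X -> X)
  (f : X -> K) : Prop :=
  forall (a b : K) (x : X),
    skew_prod act f (cstK X (a + b)) x =
    skew_prod act f (cstK X a) x + skew_prod act f (cstK X b) x.

Definition skew_invertible (K : unitRingType) (X : Type) (act : K -> X -> X)
  (f : X -> K) : Prop :=
  exists g : X -> K,
    (forall x, skew_prod act f g x = cstK X 1 x) /\
    (forall x, skew_prod act g f x = cstK X 1 x).

From mathcomp Require Import all_boot all_algebra.
From Stdlib Require Import ClassicalEpsilon.
Import GRing.Theory.
Local Open Scope ring_scope.

(* For a nonzero scalar a, the skew product with the constant a is
   (f <> a)(x) = f(^a x) a.  Call a "normalizing scalar" for f at x a nonzero
   a with f(^a x) = a^-1.

   - Necessity: if f <> g = g <> f = 1 then f never vanishes (from g <> f = 1)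
     and g(x) is a normalizing scalar at x (from f <> g = 1).
   - Sufficiency: for a nonvanishing skew-convex f, normalizing scalars are
     unique: skew convexity applied to a = (a - b) + b gives
     f(^(a-b) x)(a - b) = 0, forcing a = b.  Choosing a normalizing scalar
     g(x) at every x yields f <> g = 1 directly, and g <> f = 1 because the
     unique normalizing scalar at ^(f x) x is (f x)^-1 (by the action law). *)

Section SkewInverse.

Variables (K : unitRingType) (X : Type) (act : K -> X -> X).
Hypothesis HK : skew_field_axiom K.
Hypothesis Hact : left_Kstar_action act.

Definition normalizing (f : X -> K) (x : X) (a : K) : Prop :=
  a != 0 /\ f (act a x) = a^-1.

Lemma skew_prod_cst (f : X -> K) (a : K) (x : X) :
  a != 0 -> skew_prod act f (cstK X a) x = f (act a x) * a.
Proof. by move=> a0; rewrite /skew_prod /cstK (negPf a0). Qed.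

Lemma normalizingP (f : X -> K) (x : X) (a : K) :
  a != 0 -> f (act a x) * a = 1 -> normalizing f x a.
Proof.
move=> a0 h; split=> //.
by rewrite -[LHS]mulr1 -(mulrV (HK _ a0)) mulrA h mul1r.
Qed.

Lemma skew_invertible_necessary (f g : X -> K) :
  (forall x, skew_prod act f g x = 1) ->
  (forall x, skew_prod act g f x = 1) ->
  (forall x, f x != 0) /\ (forall x, normalizing f x (g x)).
Proof.
move=> Hfg Hgf; have nz1 : (1 : K) != 0 := oner_neq0 K.
split=> x.
  apply/eqP => fx0; move: (Hgf x); rewrite /skew_prod fx0 eqxx => h.
  by rewrite h eqxx in nz1.
move: (Hfg x); rewrite /skew_prod.
case: eqP => [_ h | /eqP gx]; first by rewrite h eqxx in nz1.
exact: normalizingP.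
Qed.

Section Sufficiency.

Variable f : X -> K.
Hypothesis Hf : skew_convex act f.
Hypothesis fnz : forall x, f x != 0.

Lemma normalizing_unique {x : X} {a b : K} :
  normalizing f x a -> normalizing f x b -> a = b.
Proof.
move=> [a0 ha] [b0 hb]; apply/eqP; rewrite -subr_eq0; apply: contraT => dab.
have := Hf (a - b) b x; rewrite subrK !skew_prod_cst //.
rewrite ha hb (mulVr (HK _ a0)) (mulVr (HK _ b0)) => /eqP.
rewrite -subr_eq subrr eq_sym => /eqP h.
have := fnz (act (a - b) x).
by rewrite -(mulrK (HK _ dab) (f _)) h mul0r eqxx.
Qed.

Lemma normalizing_inv_shift (x : X) :
  normalizing f (act (f x) x) (f x)^-1.
Proof.
have fu := HK _ (fnz x); split; first by rewrite invr_eq0 fnz.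
by rewrite (proj2 Hact) ?invr_eq0 ?fnz // (mulVr fu) (proj1 Hact) invrK.
Qed.

Lemma normalizing_skew_inverse (g : X -> K) :
  (forall x, normalizing f x (g x)) ->
  (forall x, skew_prod act f g x = 1) /\ (forall x, skew_prod act g f x = 1).
Proof.
move=> gP; split=> x.
  have [g0 gf] := gP x.
  by rewrite /skew_prod (negPf g0) gf (mulVr (HK _ g0)).
rewrite /skew_prod (negPf (fnz x)).
rewrite (normalizing_unique (gP (act (f x) x)) (normalizing_inv_shift x)).
exact: mulVr (HK _ (fnz x)).
Qed.

End Sufficiency.

End SkewInverse.

Arguments normalizing {K X} act f x a.
Arguments skew_invertible_necessary {K X act} HK {f g}.
Arguments normalizing_skew_inverse {K X act} HK Hact {f} Hf fnz {g}.

Theorem proposition2p10 (K : unitRingType) (X : Type) (act : K -> X -> X)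
  (HK : skew_field_axiom K) (HX : inhabited X) (Hact : left_Kstar_action act)
  (f : X -> K) (Hf : skew_convex act f) :
  skew_invertible act f <->
  ((forall x : X, f x != 0) /\
   (forall x : X, exists a : K, a != 0 /\ f (act a x) = a^-1)).
Proof.
split.
  case=> g [Hfg Hgf].
  have [fnz gP] := skew_invertible_necessary HK Hfg Hgf.
  by split=> // x; exists (g x); exact: gP.
case=> fnz hex.
pose g y := proj1_sig (constructive_indefinite_description _ (hex y)).
have gP : forall y, normalizing act f y (g y).
  by move=> y; rewrite /g; case: constructive_indefinite_description.
exists g; exact: (normalizing_skew_inverse HK Hact Hf fnz gP).
Qed.
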